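(* Fix $k\in\mathbb{N}$ and let $Q$ be a class of graphs (closed under isomorphism) each of treewidth at most $k$. Then $P_Q$ is weakly distinguishing.
   Context: All graphs are finite and simple. For a class $Q$, $P_Q(G;X)=\sum_{A\subseteq V(G):\, G[A]\in Q}X^{|A|}$, where $G[A]$ is the induced subgraph on $A$. A graph $G$ is $P$-unique if every graph $H$ with $P(G)=P(H)$ is isomorphic to $G$. With $\mathcal{G}(n)$ the set of isomorphism classes of graphs on $n$ vertices and $U_P(n)$ the $P$-unique graphs in $\mathcal{G}(n)$, $P$ is weakly distinguishing if $\lim_{n\to\infty}|U_P(n)|/|\mathcal{G}(n)|=0$. *)

From mathcomp Require Import all_boot all_order all_algebra.
From mathcomp Require Import boolp.

Set Implicit Arguments.
Unset Strict Implicit.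
Unset Printing Implicit Defensive.

Import GRing.Theory Num.Theory.

Definition simpleb n (f : {ffun 'I_n * 'I_n -> bool}) : bool :=
  [forall x, forall y, f (x, y) == f (y, x)] && [forall x, ~~ f (x, x)].

Definition graph n := {f : {ffun 'I_n * 'I_n -> bool} | simpleb f}.

Definition adj n (G : graph n) : rel 'I_n := fun x y => sval G (x, y).

Definition iso m n (G : graph m) (H : graph n) : Prop :=
  exists f : 'I_m -> 'I_n, bijective f /\ forall x y, adj G x y = adj H (f x) (f y).

Definition induced_fun n (G : graph n) (A : {set 'I_n}) :
  {ffun 'I_#|A| * 'I_#|A| -> bool} :=
  [ffun p => adj G (enum_val p.1) (enum_val p.2)].

Lemma induced_simple n (G : graph n) (A : {set 'I_n}) : simpleb (induced_fun G A).
Proof.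
have /andP[/forallP s /forallP i] := svalP G.
apply/andP; split; apply/forallP => x; first apply/forallP => y.
  by rewrite !ffunE /adj /= (eqP (forallP (s _) _)).
by rewrite ffunE /adj /= i.
Qed.

Definition induced n (G : graph n) (A : {set 'I_n}) : graph #|A| :=
  exist _ (induced_fun G A) (induced_simple G A).

Definition graph_class := forall m, graph m -> Prop.

Definition iso_closed (Q : graph_class) : Prop :=
  forall m n (G : graph m) (H : graph n), iso G H -> Q m G -> Q n H.

Definition PQ (Q : graph_class) n (G : graph n) : {poly int} :=
  \sum_(A : {set 'I_n} | `[< Q _ (induced G A) >]) 'X^#|A|.

Definition is_tree p (T : graph p) : Prop :=
  0 < p /\ (forall x y, connect (adj T) x y) /\
  (forall s : seq 'I_p, uniq s -> 2 < size s -> ~~ cycle (adj T) s).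

Definition tree_decomposition n (G : graph n) p (T : graph p)
  (B : 'I_p -> {set 'I_n}) : Prop :=
  [/\ is_tree T,
      (forall v, exists t, v \in B t),
      (forall u v, adj G u v -> exists t, (u \in B t) && (v \in B t)) &
      (forall v t1 t2, v \in B t1 -> v \in B t2 ->
         connect [rel a b | [&& adj T a b, v \in B a & v \in B b]] t1 t2)].

Definition treewidth_le n (G : graph n) (k : nat) : Prop :=
  exists p (T : graph p) (B : 'I_p -> {set 'I_n}),
    tree_decomposition G T B /\ forall t, #|B t| <= k.+1.

Definition graph_poly (R : Type) := forall n, graph n -> R.

Definition P_unique (R : Type) (P : graph_poly R) n (G : graph n) : Prop :=
  forall m (H : graph m), P m H = P n G -> iso H G.

Definition iso_classes n : {set {set graph n}} :=
  [set [set H | `[< iso G H >]] | G : graph n].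

Definition unique_classes (R : Type) (P : graph_poly R) n : {set {set graph n}} :=
  [set [set H | `[< iso G H >]] | G in [set G : graph n | `[< P_unique P G >]]].

Definition weakly_distinguishing (R : Type) (P : graph_poly R) : Prop :=
  forall eps : rat, (0 < eps)%R -> exists N, forall n, (N <= n)%N ->
    (`| (#|unique_classes P n|%:R / #|iso_classes n|%:R : rat) | < eps)%R.

(* Graphs of treewidth at most k are k-degenerate: a vertex lying only in a
   leaf bag of a tree decomposition has at most k neighbours.  Hence every A
   with G[A] in Q contains an independent set of size at least |A|/(k+1).
   Fix r = n/(8(k+1)).  If G has no independent r-set, P_Q(G) only involves
   sets of size below (k+1)r, so it takes at most (2^n+1)^((k+1)r) values, and
   the P_Q-unique graphs of this kind fall into at most that many isomorphism
   classes.  Graphs with an independent r-set number at most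
   2^n 2^(C(n,2) - C(r,2)).  Both bounds are o(2^C(n,2)/n!), while there are at
   least 2^C(n,2)/n! isomorphism classes. *)

From mathcomp Require Import all_boot all_order all_algebra.
From mathcomp Require Import boolp.
From mathcomp Require Import fingroup perm zify lra.

Set Implicit Arguments.
Unset Strict Implicit.
Unset Printing Implicit Defensive.

Import Order.TTheory GRing.Theory Num.Theory.

Section Graphs.

Variable n : nat.
Implicit Types (G H : graph n) (r : rel 'I_n) (A I J : {set 'I_n}).

Lemma adj_sym G x y : adj G x y = adj G y x.
Proof.
have /andP[/forallP sym _] := svalP G.
by rewrite /adj (eqP (forallP (sym x) y)).
Qed.

Lemma adj_irr G x : adj G x x = false.
Proof.
have /andP[_ /forallP irr] := svalP G.
exact/negbTE/irr.
Qed.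

Lemma graph_ext G H : (forall x y, adj G x y = adj H x y) -> G = H.
Proof. by move=> eqGH; apply/val_inj/ffunP => -[x y]; apply: eqGH. Qed.

Definition graph_of_rel_fun r : {ffun 'I_n * 'I_n -> bool} :=
  [ffun p => [&& p.1 != p.2, r p.1 p.2 & r p.2 p.1]].

Lemma graph_of_rel_simple r : simpleb (graph_of_rel_fun r).
Proof.
apply/andP; split; apply/forallP => x; first apply/forallP => y.
  by rewrite !ffunE /= (eq_sym x) (andbC (r x y)).
by rewrite ffunE /= eqxx.
Qed.

Definition graph_of_rel r : graph n :=
  exist _ (graph_of_rel_fun r) (graph_of_rel_simple r).

Lemma adj_graph_of_rel r x y :
  adj (graph_of_rel r) x y = [&& x != y, r x y & r y x].
Proof. by rewrite /adj /= ffunE. Qed.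

Lemma adj_graph_of_simple_rel r :
  symmetric r -> irreflexive r -> adj (graph_of_rel r) =2 r.
Proof.
move=> rsym rirr x y; rewrite adj_graph_of_rel -rsym andbb.
by case: eqVneq => [->|]; rewrite ?rirr.
Qed.

Definition nbhd G A v := [set u in A | adj G v u].

Definition indep G I :=
  [forall u in I, forall v in I, ~~ adj G u v].

Lemma indepP G I : reflect {in I &, forall u v, ~~ adj G u v} (indep G I).
Proof.
apply: (iffP forall_inP) => [indI u v uI vI|indI u uI].
  exact: (forall_inP (indI u uI)).
by apply/forall_inP => v; apply: indI.
Qed.

Lemma indepS G I J : J \subset I -> indep G I -> indep G J.
Proof.
move=> /subsetP JI /indepP indI; apply/indepP => u v uJ vJ.
by apply: indI; apply: JI.
Qed.

End Graphs.

Lemma iso_refl n (G : graph n) : iso G G.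
Proof. by exists id; split => //; exists id. Qed.

Lemma iso_sym m n (G : graph m) (H : graph n) : iso G H -> iso H G.
Proof.
move=> [f [[g fK gK] adjf]]; exists g; split; first by exists f.
by move=> x y; rewrite adjf !gK.
Qed.

Lemma iso_trans m n p (G : graph m) (H : graph n) (K : graph p) :
  iso G H -> iso H K -> iso G K.
Proof.
move=> [f [bij_f adjf]] [g [bij_g adjg]]; exists (g \o f).
by split => [|x y]; [apply: bij_comp | rewrite adjf adjg].
Qed.

(** * Tree decompositions and degeneracy *)

(* A duplicate-free path through [l] would enter and leave [l] via [l']. *)
Lemma connect_avoid_leaf (X : finType) (e e' : rel X) l l' x y :
  (forall t, e l t -> t = l') -> (forall t, e t l -> t = l') ->
  {in predC1 l &, subrel e e'} ->
  x != l -> y != l -> connect e x y -> connect e' x y.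
Proof.
move=> out_l in_l ee' xl yl /connectP[q path_q y_q].
case/shortenP: path_q y_q => q' path_q' uniq_q' _ y_q'.
suff lNq' : l \notin q'.
  apply/connectP; exists q' => //; apply: (sub_in_path ee') path_q'.
  by apply/allP => z; rewrite !inE => /predU1P[-> //|zq]; apply: contraTneq zq => ->.
apply/negP => lq'; case/splitPr: lq' path_q' uniq_q' y_q' => q1 q2.
rewrite cat_path => /and3P[_ /in_l pre_l path_q2].
case: q2 path_q2 => [_ _|b q2 /andP[/out_l post_l _]].
  by rewrite last_cat => /eqP; apply/negP.
rewrite -cat_cons cat_uniq => /and3P[_ /hasP[]]; exists b.
  by rewrite !inE eqxx orbT.
by rewrite post_l -pre_l mem_last.
Qed.

Section Trees.

Variables (p : nat) (T : graph p).

Definition acyclic :=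
  forall s : seq 'I_p, uniq s -> 2 < size s -> ~~ path.cycle (adj T) s.

Definition restr (S : {set 'I_p}) : rel 'I_p :=
  fun a b => [&& a \in S, b \in S & adj T a b].

Hypothesis acyclicT : acyclic.

Lemma acyclic_no_chord x y s t :
  uniq [:: x, y & s] -> path (adj T) x (y :: s) -> t \in s -> ~~ adj T x t.
Proof.
move=> + + ts; case/splitPr: ts => s1 s2.
rewrite -cat_rcons -!cat_cons cat_uniq cat_path.
move=> /andP[uniq_xyt _] /andP[path_xyt _]; apply/negP => xt.
have := acyclicT uniq_xyt; rewrite /= size_rcons => /(_ isT)/negP; apply.
by rewrite /= (rcons_path _ _ (rcons s1 t)) last_rcons (adj_sym _ t) xt andbT.
Qed.

Definition connected_in (S : {set 'I_p}) :=
  {in S &, forall x y, connect (restr S) x y}.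

Lemma connected_in_edge S :
  connected_in S -> 1 < #|S| -> exists x y, [&& x \in S, y \in S & adj T x y].
Proof.
move=> conS /card_gt1P[x [y [xS yS xy]]].
have /connectP[[|z q] /= pq yE] := conS x y xS yS; first by rewrite -yE eqxx in xy.
by case/andP: pq => /and3P[_ zS xz] _; exists x, z; rewrite xS zS.
Qed.

Lemma restrD1 S l : {in predC1 l &, subrel (restr S) (restr (S :\ l))}.
Proof.
move=> a b; rewrite !inE => al bl /and3P[aS bS ab].
by rewrite /restr !in_setD1 al bl aS bS.
Qed.

Definition simple_path_in (S : {set 'I_p}) (s : seq 'I_p) :=
  [&& uniq s, all (mem S) s & sorted (adj T) s].

(* The first vertex of a longest simple path in S is a leaf. *)
Lemma tree_has_leaf S :
  connected_in S -> 1 < #|S| ->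
  exists l l', [/\ l \in S, l' \in S, l != l' &
                   forall t, t \in S -> adj T l t -> t = l'].
Proof.
move=> /connected_in_edge edgeS /edgeS[x [z /and3P[xS zS xz]]].
pose has_path m := [exists s : m.-tuple 'I_p, simple_path_in S s].
have path2 : has_path 2.
  apply/existsP; exists [tuple x; z].
  rewrite /simple_path_in /= inE xS zS xz !andbT.
  by apply: contraTneq xz => ->; rewrite adj_irr.
have path_max m : has_path m -> m <= #|S|.
  case/existsP => -[s /= /eqP <-] /and3P[uniq_s /allP sS _].
  by rewrite -(card_uniqP uniq_s); apply/subset_leq_card/subsetP.
have [m /existsP[[s /= /eqP size_s] path_s] longest] :=
  ex_maxnP (ex_intro has_path 2 path2) path_max.
subst m; have := longest 2 path2.
case: s path_s longest => [|l [|l' s]] //.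
case/and3P=> uniq_s all_s /= /andP[ll' path_s] longest _.
have /and3P[lS l'S _] := all_s.
exists l, l'; split => //; first by apply: contraTneq ll' => ->; rewrite adj_irr.
move=> t tS lt; apply/eqP/negPn/negP => tl'.
have tl : t != l by apply: contraTneq lt => ->; rewrite adj_irr.
have [ts|tNs] := boolP (t \in s).
  by move: lt; apply/negP/(acyclic_no_chord uniq_s _ ts); rewrite /= ll'.
have /longest : has_path (size s).+3.
  apply/existsP; exists (in_tuple [:: t, l, l' & s]).
  rewrite /simple_path_in cons_uniq uniq_s !inE !negb_or tl tl' tNs.
  by rewrite /= tS (adj_sym _ t) lt ll' path_s; move: all_s => /= ->.
by rewrite ltnn.
Qed.

Lemma connected_inD1 S l l' :
  connected_in S -> l' \in S -> l != l' ->
  (forall t, t \in S -> adj T l t -> t = l') -> connected_in (S :\ l).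
Proof.
move=> conS l'S ll' leaf x y; rewrite !in_setD1 => /andP[xl xS] /andP[yl yS].
apply: (connect_avoid_leaf (l' := l') _ _ (@restrD1 S l)) (conS x y xS yS) => //.
- by move=> t /and3P[_ tS lt]; apply: leaf.
- by move=> t /and3P[tS _ tl]; apply: leaf; rewrite // adj_sym.
Qed.

End Trees.

Section Decompositions.

Variables (n p k : nat) (G : graph n) (T : graph p) (B : 'I_p -> {set 'I_n}).
Implicit Types (S : {set 'I_p}) (A : {set 'I_n}).

Definition bag_rel S v : rel 'I_p :=
  fun a b => [&& restr T S a b, v \in B a & v \in B b].

(* A tree decomposition of G[A] of width k on the subtree of T spanned by S;
   both S and A may shrink, which is what the degeneracy argument needs. *)
Record decomposition_on S A : Prop := DecompositionOn {
  dec_connected : connected_in T S;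
  dec_cover : forall v, v \in A -> exists2 t, t \in S & v \in B t;
  dec_edge : {in A &, forall u v, adj G u v ->
                exists2 t, t \in S & (u \in B t) && (v \in B t)};
  dec_bag_connected : forall v, v \in A -> {in S &, forall t1 t2,
                        v \in B t1 -> v \in B t2 -> connect (bag_rel S v) t1 t2};
  dec_width : forall t, t \in S -> #|B t :&: A| <= k.+1 }.

Lemma decomposition_onS S A A' :
  A' \subset A -> decomposition_on S A -> decomposition_on S A'.
Proof.
move=> /subsetP sA'A [conS cov edge bconn width]; split => //.
- by move=> v /sA'A /cov.
- by move=> u v /sA'A uA /sA'A vA; apply: edge.
- by move=> v /sA'A /bconn.
- move=> t /width; apply: leq_trans; apply/subset_leq_card/setIS/subsetP.
  exact: sA'A.
Qed.

Lemma nbhd_card_single_bag S A v l :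
  decomposition_on S A -> v \in A -> l \in S -> v \in B l ->
  (forall t, t \in S -> v \in B t -> t = l) -> #|nbhd G A v| <= k.
Proof.
move=> [_ _ edge _ width] vA lS vl only_l.
have sub : nbhd G A v \subset (B l :&: A) :\ v.
  apply/subsetP => u; rewrite !inE => /andP[uA vu].
  have [t tS /andP[ut vt]] := edge u v uA vA (etrans (adj_sym _ _ _) vu).
  rewrite -(only_l t tS vt) ut uA.
  by rewrite !andbT; apply: contraTneq vu => ->; rewrite adj_irr.
apply: leq_trans (subset_leq_card sub) _.
by move: (width l lS); rewrite (cardsD1 v) !inE vl vA.
Qed.

Lemma decomposition_onD1 S A l l' :
  decomposition_on S A -> l' \in S -> l != l' ->
  (forall t, t \in S -> adj T l t -> t = l') ->
  {in A, forall v, v \in B l -> v \in B l'} ->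
  decomposition_on (S :\ l) A.
Proof.
move=> [conS cov edge bconn width] l'S ll' leaf Bll'.
have l'Sl : l' \in S :\ l by rewrite in_setD1 eq_sym ll'.
split.
- exact: connected_inD1 conS l'S ll' leaf.
- move=> v vA; have [t tS vt] := cov v vA.
  have [tl|tl] := eqVneq t l; last by exists t; rewrite // in_setD1 tl.
  by exists l'; rewrite // Bll' // -tl.
- move=> u v uA vA uv; have [t tS /andP[ut vt]] := edge u v uA vA uv.
  have [tl|tl] := eqVneq t l; last by exists t; rewrite ?in_setD1 ?tl ?ut.
  by exists l'; rewrite // !Bll' // -tl.
- move=> v vA t1 t2; rewrite !in_setD1 => /andP[t1l t1S] /andP[t2l t2S] v1 v2.
  apply: (connect_avoid_leaf (l' := l') _ _ _ t1l t2l (bconn v vA t1 t2 t1S t2S v1 v2)).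
  + by move=> t /and3P[/and3P[_ tS lt] _ _]; apply: leaf.
  + by move=> t /and3P[/and3P[tS _ tl] _ _]; apply: leaf; rewrite // adj_sym.
  + by move=> a b al bl /and3P[/(restrD1 al bl) ab va vb]; apply/and3P.
- by move=> t; rewrite in_setD1 => /andP[_ /width].
Qed.

Lemma leaf_private_vertex S A l l' v :
  decomposition_on S A -> l \in S ->
  (forall t, t \in S -> adj T l t -> t = l') ->
  v \in A -> v \in B l -> v \notin B l' ->
  forall t, t \in S -> v \in B t -> t = l.
Proof.
move=> decS lS leaf vA vl vNl' t tS vt.
have /connectP[[|z q] //= + ->] := dec_bag_connected decS vA lS tS vl vt.
by case/andP=> /and3P[/and3P[_ zS /(leaf z zS) ->] _ vl'] _; rewrite vl' in vNl'.
Qed.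

(* Take a leaf bag: either it holds a vertex of A missing from the neighbouring
   bag, and that vertex lies in no other bag, or the leaf can be deleted. *)
Lemma decomposition_low_degree S A :
  acyclic T -> decomposition_on S A -> A != set0 ->
  exists2 v, v \in A & #|nbhd G A v| <= k.
Proof.
move=> acT; elim: {S}#|S|.+1 {-2}S (ltnSn #|S|) => // m IH S Sm decS A0.
have [v0 v0A] := set0Pn _ A0.
have [/card_le1_eqP S1|S2] := leqP #|S| 1.
  have [t tS v0t] := dec_cover decS v0A.
  exists v0 => //; apply: (nbhd_card_single_bag decS v0A tS v0t).
  by move=> t' t'S _; apply: S1.
have [l [l' [lS l'S ll' leaf]]] := tree_has_leaf acT (dec_connected decS) S2.
have [|] := boolP [exists v in A, (v \in B l) && (v \notin B l')].
  case/exists_inP => v vA /andP[vl vNl']; exists v => //.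
  apply: (nbhd_card_single_bag decS vA lS vl).
  exact: leaf_private_vertex decS lS leaf vA vl vNl'.
move/exists_inPn => Bll'; apply: (IH (S :\ l)) => //.
  by move: Sm; rewrite (cardsD1 l) lS.
apply: decomposition_onD1 decS l'S ll' leaf _ => v vA vl.
by move: (Bll' v vA); rewrite vl negbK.
Qed.

End Decompositions.

Lemma indepU1 n (G : graph n) (I : {set 'I_n}) v :
  indep G I -> {in I, forall u, ~~ adj G v u} -> indep G (v |: I).
Proof.
move=> /indepP indI vI; apply/indepP => x y.
rewrite !inE => /predU1P[-> | xI] /predU1P[-> | yI]; rewrite ?adj_irr //.
- exact: vI.
- by rewrite adj_sym; apply: vI.
- exact: indI.
Qed.

Lemma degenerate_indep n (G : graph n) (k : nat) (A : {set 'I_n}) :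
  (forall A' : {set 'I_n}, A' \subset A -> A' != set0 ->
     exists2 v, v \in A' & #|nbhd G A' v| <= k) ->
  exists I : {set 'I_n}, [/\ I \subset A, indep G I & #|A| <= k.+1 * #|I|].
Proof.
elim: {A}#|A|.+1 {-2}A (ltnSn #|A|) => // m IH A Am degA.
have [->|A0] := eqVneq A set0.
  by exists set0; rewrite sub0set cards0; split => //; apply/indepP => u; rewrite inE.
have [v vA deg_v] := degA A (subxx A) A0.
set A' := A :\: (v |: nbhd G A v).
have A'A : A' \subset A := subsetDl _ _.
have vNA' : v \notin A' by rewrite !inE eqxx.
have ltA' : #|A'| < #|A| by apply/proper_card/properP; split => //; exists v.
have [I' [I'A' indI' cardA']] := IH A' (leq_trans ltA' (ltnSE Am))
  (fun A'' sA'' => degA A'' (subset_trans sA'' A'A)).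
have vNI' : v \notin I' by apply: contra vNA'; apply: (subsetP I'A').
exists (v |: I'); split.
- by rewrite subUset sub1set vA (subset_trans I'A' A'A).
- apply: indepU1 indI' _ => u /(subsetP I'A').
  by rewrite !inE negb_or => /andP[/andP[_ uNv] uA]; rewrite uA in uNv.
- rewrite cardsU1 vNI' mulnSr -(cardsID (v |: nbhd G A v) A) addnC leq_add //.
  apply: leq_trans (subset_leq_card (subsetIr _ _)) _.
  by rewrite cardsU1 -add1n leq_add ?leq_b1.
Qed.

Lemma induced_treewidth_decomposition n (G : graph n) (A : {set 'I_n}) k :
  treewidth_le (induced G A) k ->
  exists p (T : graph p) (B : 'I_p -> {set 'I_n}),
    acyclic T /\ decomposition_on k G T B setT A.
Proof.
move=> [p [T [B' [[[_ [conT acT]] cov edge bconn] width]]]].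
pose B t := [set enum_val x | x in B' t].
have memB v (vA : v \in A) t : (v \in B t) = (enum_rank_in vA v \in B' t).
  by rewrite -{1}(enum_rankK_in vA vA) mem_imset //; apply: enum_val_inj.
exists p, T, B; split => //; split.
- by move=> x y _ _; rewrite (eq_connect (e' := adj T)) // => a b; rewrite /restr !inE.
- by move=> v vA; have [t vt] := cov (enum_rank_in vA v); exists t; rewrite ?inE ?memB.
- move=> u v uA vA uv.
  have : adj (induced G A) (enum_rank_in uA u) (enum_rank_in vA v).
    by rewrite /adj /= ffunE /= !enum_rankK_in.
  by case/edge => t /andP[ut vt]; exists t; rewrite ?inE // !memB ut vt.
- move=> v vA t1 t2 _ _; rewrite !memB => v1 v2.
  rewrite (eq_connect (e' := [rel a b | [&& adj T a b,
    enum_rank_in vA v \in B' a & enum_rank_in vA v \in B' b]])); first exact: bconn.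
  by move=> a b; rewrite /bag_rel /restr !inE !memB.
- move=> t _; apply: leq_trans (subset_leq_card (subsetIl _ _)) _.
  exact: leq_trans (leq_imset_card _ _) (width t).
Qed.

Lemma treewidth_indep n (G : graph n) (A : {set 'I_n}) k :
  treewidth_le (induced G A) k ->
  exists I : {set 'I_n}, [/\ I \subset A, indep G I & #|A| <= k.+1 * #|I|].
Proof.
case/induced_treewidth_decomposition => p [T [B [acT decA]]].
apply: degenerate_indep => A' A'A A'0.
exact: decomposition_low_degree acT (decomposition_onS A'A decA) A'0.
Qed.

(** * Counting graphs *)

Lemma leq_card_bigcup (T I : finType) (P : pred I) (F : I -> {set T}) :
  #|\bigcup_(i | P i) F i| <= \sum_(i | P i) #|F i|.
Proof.
elim/big_ind2: _ => [|X1 m1 X2 m2 le1 le2|]; rewrite ?cards0 //.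
by rewrite cardsU (leq_trans (leq_subr _ _)) ?leq_add.
Qed.

Lemma leq_card_imset_factor (aT rT1 rT2 : finType) (f : aT -> rT1) (g : aT -> rT2)
  (D : {set aT}) :
  {in D &, forall x y, g x = g y -> f x = f y} -> #|f @: D| <= #|g @: D|.
Proof.
move=> fg; have [->|[x0 x0D]] := set_0Vmem D; first by rewrite !imset0 !cards0.
pose h c := f (odflt x0 [pick x in D | g x == c]).
suff sub : f @: D \subset h @: (g @: D).
  exact: leq_trans (subset_leq_card sub) (leq_imset_card _ _).
apply/subsetP => _ /imsetP[x xD ->]; apply/imsetP; exists (g x); first exact: imset_f.
rewrite /h; case: pickP => [z /andP[zD /eqP gz]|/(_ x)]; last by rewrite xD eqxx.
exact: fg.
Qed.

Lemma card_graph_ge m : 2 ^ 'C(m, 2) <= #|{: graph m}|.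
Proof.
pose E := {X : {set 'I_m} | #|X| == 2}.
pose F (g : {ffun E -> bool}) : graph m :=
  graph_of_rel (fun x y => oapp g false (insub [set x; y])).
have F_inj : injective F.
  move=> g1 g2 eqF; apply/ffunP => X.
  have /cards2P[x [y [xy eX]]] := valP X.
  have insubX : insub [set x; y] = Some X by rewrite -eX valK.
  have insubX' : insub [set y; x] = Some X by rewrite setUC.
  move: (congr1 (fun G => adj G x y) eqF).
  by rewrite !adj_graph_of_rel insubX insubX' /= xy !andbb.
have -> : 'C(m, 2) = #|{: E}|.
  rewrite card_sig -[m in LHS]card_ord -card_draws.
  by apply: eq_card => X; rewrite !inE.
have -> : 2 ^ #|{: E}| = #|{: {ffun E -> bool}}| by rewrite card_ffun card_bool.
by rewrite -(card_imset _ F_inj) max_card.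
Qed.

Definition relabel n (G : graph n) (s : {perm 'I_n}) : graph n :=
  graph_of_rel (fun x y => adj G (s^-1 x)%g (s^-1 y)%g).

Lemma card_iso_class n (G : graph n) :
  #|[set H : graph n | `[< iso G H >]]| <= n`!.
Proof.
have sub : [set H | `[< iso G H >]] \subset [set relabel G s | s : {perm 'I_n}].
  apply/subsetP => H; rewrite inE => /asboolP[f [/bij_inj f_inj adjf]].
  apply/imsetP; exists (perm f_inj) => //; apply: graph_ext => a b.
  rewrite adj_graph_of_simple_rel => [|x y|x]; [|exact: adj_sym|exact: adj_irr].
  by rewrite adjf -!(permE f_inj) !permKV.
apply: leq_trans (subset_leq_card sub) _.
by apply: leq_trans (leq_imset_card _ _) _; rewrite card_Sn.
Qed.

Lemma card_graph_le_classes n : #|{: graph n}| <= #|iso_classes n| * n`!.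
Proof.
have cover : [set: graph n] \subset \bigcup_(C in iso_classes n) C.
  apply/subsetP => H _; apply/bigcupP; exists [set K | `[< iso H K >]].
    exact: imset_f.
  by rewrite inE; apply/asboolP/iso_refl.
rewrite -cardsT; apply: leq_trans (subset_leq_card cover) _.
apply: leq_trans (leq_card_bigcup _ _) _.
rewrite -sum_nat_const; apply: leq_sum => _ /imsetP[G _ ->].
exact: card_iso_class.
Qed.

Lemma card_iso_classes_gt0 n : 0 < #|iso_classes n|.
Proof.
have := leq_trans (card_graph_ge n) (card_graph_le_classes n).
by rewrite lt0n; apply: contraTneq => ->; rewrite mul0n leqn0 expn_eq0.
Qed.

Section ReplaceInduced.

Variables (n : nat) (I : {set 'I_n}).

Definition embed_rel (H : graph #|I|) : rel 'I_n :=
  fun x y => [exists a, exists b, [&& enum_val a == x, enum_val b == y & adj H a b]].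

Lemma embed_relE H a b : embed_rel H (enum_val a) (enum_val b) = adj H a b.
Proof.
apply/existsP/idP => [[a' /existsP[b' /and3P[/eqP/enum_val_inj-> /eqP]]]|Hab].
  by move/enum_val_inj->.
by exists a; apply/existsP; exists b; rewrite !eqxx.
Qed.

Definition replace_rel (G : graph n) (H : graph #|I|) : rel 'I_n :=
  fun x y => if (x \in I) && (y \in I) then embed_rel H x y else adj G x y.

Lemma replace_rel_sym G H : symmetric (replace_rel G H).
Proof.
move=> x y; rewrite /replace_rel andbC; case: ifP => _; last exact: adj_sym.
by apply/existsP/existsP => -[a /existsP[b /and3P[xa yb ab]]];
  exists b; apply/existsP; exists a; rewrite xa yb adj_sym.
Qed.

Lemma replace_rel_irr G H : irreflexive (replace_rel G H).
Proof.
move=> x; rewrite /replace_rel; case: ifP => _; last exact: adj_irr.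
apply/negbTE/existsP => -[a /existsP[b /and3P[/eqP xa /eqP xb]]].
by rewrite -xb in xa; rewrite (enum_val_inj xa) adj_irr.
Qed.

Definition replace_induced (GH : graph n * graph #|I|) : graph n :=
  graph_of_rel (replace_rel GH.1 GH.2).

Lemma adj_replace_induced GH : adj (replace_induced GH) =2 replace_rel GH.1 GH.2.
Proof. exact/adj_graph_of_simple_rel/replace_rel_irr/replace_rel_sym. Qed.

Lemma card_indep_on :
  #|[set G : graph n | indep G I]| * #|{: graph #|I|}| <= #|{: graph n}|.
Proof.
set D := setX [set G : graph n | indep G I] [set: graph #|I|].
have inj : {in D &, injective replace_induced}.
  move=> [G1 H1] [G2 H2]; rewrite !inE /= !andbT => /indepP ind1 /indepP ind2 eqGH.
  have eq_rel x y : replace_rel G1 H1 x y = replace_rel G2 H2 x y.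
    by rewrite -[LHS](adj_replace_induced (G1, H1)) eqGH adj_replace_induced.
  congr (_, _); apply: graph_ext.
  - move=> x y; move: (eq_rel x y); rewrite /replace_rel.
    case: ifP => // /andP[xI yI] _.
    by rewrite (negbTE (ind1 x y xI yI)) (negbTE (ind2 x y xI yI)).
  - move=> a b; move: (eq_rel (enum_val a) (enum_val b)).
    by rewrite /replace_rel !enum_valP !embed_relE.
by rewrite -cardsT -cardsX -(card_in_imset inj) max_card.
Qed.

End ReplaceInduced.

Lemma card_sets n : #|{: {set 'I_n}}| = 2 ^ n.
Proof. by rewrite -cardsT -powersetT card_powerset cardsT card_ord. Qed.

Definition has_indep n r (G : graph n) :=
  [exists I : {set 'I_n}, (#|I| == r) && indep G I].

Lemma card_has_indep n r :
  #|[set G : graph n | has_indep r G]| * 2 ^ 'C(r, 2) <= 2 ^ n * #|{: graph n}|.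
Proof.
have cover : [set G : graph n | has_indep r G] \subset
    \bigcup_(I : {set 'I_n} | #|I| == r) [set G : graph n | indep G I].
  apply/subsetP => G; rewrite inE => /existsP[I /andP[cI iI]].
  by apply/bigcupP; exists I; rewrite ?inE.
apply: leq_trans (leq_mul (subset_leq_card cover) (leqnn _)) _.
apply: leq_trans (leq_mul (leq_card_bigcup _ _) (leqnn _)) _.
rewrite big_distrl /=.
apply: leq_trans (_ : \sum_(I : {set 'I_n} | #|I| == r) #|{: graph n}| <= _).
  apply: leq_sum => I /eqP cI; apply: leq_trans (card_indep_on I).
  by rewrite leq_mul2l -cI card_graph_ge orbT.
by rewrite sum_nat_const -card_sets leq_mul2r max_card orbT.
Qed.

(** * Coefficients of P_Q *)

Section PQCoefficients.

Variable Q : graph_class.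

Definition count_Q n (G : graph n) i :=
  #|[set A : {set 'I_n} | `[< @Q _ (induced G A) >] && (#|A| == i)]|.

Lemma coef_PQ n (G : graph n) i : ((PQ Q G)`_i = (count_Q G i)%:R)%R.
Proof.
rewrite /PQ coef_sum (eq_bigr (fun A : {set 'I_n} => if #|A| == i then 1 else 0)%R).
  by rewrite -big_mkcondr sumr_const /count_Q cardsE.
by move=> A _; rewrite coefXn eq_sym; case: eqP.
Qed.

Lemma count_Q_le n (G : graph n) i : count_Q G i <= 2 ^ n.
Proof. by rewrite -card_sets max_card. Qed.

Lemma count_Q_eq0 n (G : graph n) s i :
  (forall A : {set 'I_n}, `[< @Q _ (induced G A) >] -> #|A| < s) ->
  s <= i -> count_Q G i = 0.
Proof.
move=> small le_si; apply/eqP; rewrite cards_eq0; apply/eqP/setP => A.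
rewrite !inE; apply/negbTE/nandP.
have [/small|] := boolP `[< _ >]; last by left.
by move=> lt_As; right; rewrite neq_ltn (leq_trans lt_As le_si).
Qed.

Definition count_code n s (G : graph n) : {ffun 'I_s -> 'I_(2 ^ n).+1} :=
  [ffun i : 'I_s => inord (count_Q G i)].

Lemma PQ_eq_count_code n s (G1 G2 : graph n) :
  (forall A : {set 'I_n}, `[< @Q _ (induced G1 A) >] -> #|A| < s) ->
  (forall A : {set 'I_n}, `[< @Q _ (induced G2 A) >] -> #|A| < s) ->
  count_code s G1 = count_code s G2 -> PQ Q G1 = PQ Q G2.
Proof.
move=> small1 small2 eq_code; apply/polyP => i; rewrite !coef_PQ; congr (_%:R)%R.
have [lt_is|le_si] := ltnP i s; last by rewrite !(count_Q_eq0 _ le_si).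
move/ffunP/(_ (Ordinal lt_is))/(congr1 val): eq_code.
by rewrite !ffunE /= !inordK // ltnS count_Q_le.
Qed.

End PQCoefficients.

Lemma has_indep_leq n r (G : graph n) (I : {set 'I_n}) :
  indep G I -> r <= #|I| -> has_indep r G.
Proof.
move=> indI /card_geqP[s [uniq_s size_s sI]]; apply/existsP; exists [set x in s].
rewrite cardsE (card_uniqP uniq_s) size_s eqxx (indepS _ indI) //.
by apply/subsetP => x; rewrite inE => /sI.
Qed.

Lemma card_Q_induced_lt (Q : graph_class) k n r (G : graph n) :
  (forall m (H : graph m), Q m H -> treewidth_le H k) -> ~~ has_indep r G ->
  forall A : {set 'I_n}, `[< Q _ (induced G A) >] -> #|A| < k.+1 * r.
Proof.
move=> twQ noIr A /asboolP/twQ/treewidth_indep[I [_ indI cardA]].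
apply: leq_ltn_trans cardA _; rewrite ltn_pmul2l // ltnNge.
by apply: contra noIr; apply: has_indep_leq.
Qed.

Lemma card_unique_classes (Q : graph_class) k n r :
  (forall m (H : graph m), Q m H -> treewidth_le H k) ->
  #|unique_classes (PQ Q) n| <=
    #|[set G : graph n | has_indep r G]| + (2 ^ n).+1 ^ (k.+1 * r).
Proof.
move=> twQ; set U := [set G : graph n | `[< P_unique (PQ Q) G >]].
set Ir := [set G : graph n | has_indep r G].
set iso_class := fun G : graph n => [set H : graph n | `[< iso G H >]].
rewrite [unique_classes _ _](_ : _ = iso_class @: U) // -(setID U Ir) imsetU.
apply: leq_trans (leq_card_setU _ _) (leq_add _ _).
  exact: leq_trans (leq_imset_card _ _) (subset_leq_card (subsetIr _ _)).
apply: leq_trans (leq_card_imset_factor (g := count_code Q (k.+1 * r)) _) _.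
  move=> G1 G2; rewrite !inE => /andP[NIr1 /asboolP uniq1] /andP[NIr2 _] eq_code.
  have /uniq1 iso21 := esym (PQ_eq_count_code (card_Q_induced_lt twQ NIr1)
    (card_Q_induced_lt twQ NIr2) eq_code).
  apply/setP => H; rewrite !inE; apply/asboolP/asboolP; first exact: iso_trans.
  exact/iso_trans/iso_sym.
by apply: leq_trans (max_card _) _; rewrite card_ffun !card_ord.
Qed.

(** * Asymptotics *)

Lemma fact_leq_expn n : n`! <= n ^ n.
Proof.
elim: n => // n IH; rewrite factS expnS leq_mul2l (leq_trans IH) ?orbT //.
by case: n {IH} => // n; rewrite leq_exp2r.
Qed.

Lemma sq_leq_exp2 l : 4 <= l -> l * l <= 2 ^ l.
Proof.
elim: l => // l IH; rewrite leq_eqVlt => /predU1P[<- // | /[dup] /IH le_l l4].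
by rewrite expnS; nia.
Qed.

Lemma trunc_log2_small D n : 2 ^ (D + 4) <= n -> D * (trunc_log 2 n).+1 <= n.
Proof.
move=> le_n; have n_gt0 : 0 < n by apply: leq_trans le_n; rewrite expn_gt0.
have le_log : D + 4 <= trunc_log 2 n by apply: trunc_log_max.
apply: (@leq_trans (2 ^ trunc_log 2 n)); last exact: trunc_logP.
by apply: (@leq_trans (trunc_log 2 n * trunc_log 2 n)); [nia | apply: sq_leq_exp2; lia].
Qed.

Lemma bin2_double m : 'C(m, 2) * 2 = m * m.-1.
Proof. by rewrite -[2 in LHS]/(2`!) bin_ffact ffactnS ffactn1. Qed.

Lemma eventually_exp2_bounds (k : nat) : exists N, forall n, N <= n ->
  let r := n %/ (8 * k.+1) in
  2 * n * n`! * 2 ^ n <= 2 ^ 'C(r, 2) /\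
  2 * n * n`! * (2 ^ n).+1 ^ (k.+1 * r) <= 2 ^ 'C(n, 2).
Proof.
set c := 8 * k.+1; have c8 : 8 <= c by rewrite /c; lia.
exists (2 ^ (8 * c * c + 4) + c * (8 * c + 9) + 20) => n le_n r.
set e := (trunc_log 2 n).+1.
have small_e : 8 * c * c * e <= n by apply: trunc_log2_small; lia.
have n_lt : n < 2 ^ e by apply: trunc_log_ltn.
have r_lb : r * c <= n by apply: leq_trunc_div.
have r_ub : n < r.+1 * c by apply: ltn_ceil; lia.
have r_large : 8 * c + 9 <= r by rewrite leq_divRL; lia.
have n20 : 20 <= n by lia.
clearbody e r.
have e_r : 8 * (e * n.+1) <= r.+1 * r.+1.
  rewrite -(leq_pmul2l (_ : 0 < c * c)); last by lia.
  by apply: (@leq_trans (n * n.+1)); clear -small_e r_ub; nia.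
have fact_e : 2 * n * n`! <= 2 ^ (e * n.+1).+1.
  rewrite expnS -mulnA leq_mul2l /=.
  apply: leq_trans (leq_mul (leqnn n) (fact_leq_expn n)) _.
  by rewrite -expnS expnM leq_exp2r // ltnW.
split; apply: leq_trans (leq_mul fact_e (leqnn _)) _.
  rewrite -expnD leq_exp2l // -(leq_pmul2r (_ : 0 < 2)) // bin2_double.
  by clear -c8 e_r r_ub r_large; nia.
have code_e : (2 ^ n).+1 ^ (k.+1 * r) <= 2 ^ (n.+1 * (k.+1 * r)).
  rewrite (expnM 2) leq_exp2r; last by rewrite muln_gt0; lia.
  by rewrite expnS; have := expn_gt0 2 n; lia.
apply: leq_trans (leq_mul (leqnn _) code_e) _.
rewrite -expnD leq_exp2l // -(leq_pmul2r (_ : 0 < 2)) // bin2_double.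
have : 8 * (k.+1 * r) <= n by rewrite /c in r_lb; clear -r_lb; nia.
have : r.+1 <= n by clear -r_lb c8 r_large; nia.
by clear -e_r n20; nia.
Qed.

Lemma unique_classes_sparse (Q : graph_class) k :
  (forall m (G : graph m), Q m G -> treewidth_le G k) ->
  exists N, forall n, N <= n -> n * #|unique_classes (PQ Q) n| <= #|iso_classes n|.
Proof.
move=> twQ; have [N bounds] := eventually_exp2_bounds k; exists N => n /bounds.
set r := n %/ _; set a := 2 * n * n`! => -[indep_small codes_small].
set u := #|unique_classes _ n|; set X := #|{: graph n}|.
set Ir := #|[set G : graph n | has_indep r G]|.
have Ir_le : a * Ir <= X.
  rewrite -(leq_pmul2r (expn_gt0 2 'C(r, 2))) -mulnA.
  apply: leq_trans (leq_mul (leqnn a) (card_has_indep n r)) _.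
  by rewrite mulnA mulnC leq_mul2l indep_small orbT.
have codes_le : a * (2 ^ n).+1 ^ (k.+1 * r) <= X.
  exact: leq_trans codes_small (card_graph_ge n).
have a_u : a * u <= X + X.
  apply: leq_trans (leq_add Ir_le codes_le).
  by rewrite -mulnDr leq_mul2l card_unique_classes ?orbT.
rewrite -(leq_pmul2r (fact_gt0 n)) -(leq_pmul2l (isT : 0 < 2)).
apply: (@leq_trans (a * u)); first by rewrite /a; nia.
by apply: leq_trans a_u _; rewrite addnn -mul2n leq_mul2l card_graph_le_classes.
Qed.

Section RatioLimit.

Local Open Scope ring_scope.

Lemma ratio_vanishes (u v : nat -> nat) :
  (exists N, forall n, (N <= n)%N -> (n * u n <= v n)%N) -> (forall n, (0 < v n)%N) ->
  forall eps : rat, 0 < eps ->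
    exists N, forall n, (N <= n)%N -> `|(u n)%:R / (v n)%:R| < eps.
Proof.
move=> [N0 uv] v_gt0 eps eps_gt0.
have /archi_boundP le_eps : 0 <= eps^-1 by rewrite invr_ge0 ltW.
set M := Num.Def.archi_bound _ in le_eps.
exists (maxn N0 (maxn M 1)) => n; rewrite !geq_max => /and3P[le_N0 le_M n_gt0].
have v_gt0' : 0 < (v n)%:R :> rat by rewrite ltr0n.
have nu_le : (u n)%:R * n%:R <= (v n)%:R :> rat by rewrite -natrM ler_nat mulnC uv.
have eps_n : 1 < eps * n%:R.
  rewrite -ltr_pdivrMl // mulr1.
  by apply: lt_le_trans le_eps _; rewrite ler_nat.
have v_lt : (v n)%:R < (v n)%:R * (eps * n%:R) by rewrite ltr_pMr.
rewrite ger0_norm ?divr_ge0 ?ler0n // ltr_pdivrMr //.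
rewrite -(ltr_pM2r (_ : 0 < n%:R)) ?ltr0n //.
lra.
Qed.

End RatioLimit.

Theorem corollary2 (k : nat) (Q : graph_class) :
  iso_closed Q ->
  (forall m (G : graph m), Q m G -> treewidth_le G k) ->
  weakly_distinguishing (PQ Q).
Proof.
(* The counting argument does not need Q to be closed under isomorphism. *)
move=> _ twQ.
exact: ratio_vanishes (unique_classes_sparse twQ) card_iso_classes_gt0.
Qed.
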